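(* Let $G=(V,E)$ be an undirected graph, let $K$ be the set of in-degree vectors of all orientations of $G$, and let $C_1\subset\dots\subset C_q=V$, $\{S_1,\dots,S_q\}$ and $\beta_1>\dots>\beta_q$ be the canonical chain, canonical partition and essential value-sequence of $K$. An orientation $D$ of $G$ is decreasingly minimal if and only if $\varrho_D(C_i)=0$ for each $i=1,\dots,q$ and $\beta_i-1\le\varrho_D(v)\le\beta_i$ for every node $v\in S_i$ $(i=1,\dots,q)$.
   Context: $\varrho_D(v)$ is the number of arcs of $D$ with head $v$, and $\varrho_D(X)$ the number of arcs entering $X$ (head in $X$, tail outside). The in-degree vector of $D$ is $(\varrho_D(v))_{v\in V}$. An orientation is decreasingly minimal if its in-degree vector is decreasingly minimal in $K$ (largest component as small as possible, then the second largest, etc.). Canonical objects: take a decreasingly minimal $m\in K$; for $u\in V$ let $T_m(u)=\{s\in V: m+\chi_s-\chi_u\in K\}$. Put $\beta_1=\max_v m(v)$, $C_1=\bigcup\{T_m(u):m(u)=\beta_1\}$; for $i\ge2$, while $C_{i-1}\ne V$, put $\beta_i=\max\{m(s):s\in V-C_{i-1}\}$, $C_i=\bigcup\{T_m(u):m(u)\ge\beta_i\}$; stop when $C_q=V$; $S_i=C_i-C_{i-1}$ with $C_0=\emptyset$. These objects are known not to depend on the choice of $m$. *)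

From mathcomp Require Import all_boot all_order all_algebra.
Set Implicit Arguments. Unset Strict Implicit. Unset Printing Implicit Defensive.

(* An orientation is a function [o : E -> bool]: if [o e] the arc goes from
   (ends e).1 to (ends e).2, otherwise from (ends e).2 to (ends e).1. *)

Section Orient.
Variables (V E : finType) (ends : E -> V * V).

Definition head (o : E -> bool) (e : E) : V := if o e then (ends e).2 else (ends e).1.
Definition tail (o : E -> bool) (e : E) : V := if o e then (ends e).1 else (ends e).2.

Definition indeg (o : E -> bool) (v : V) : nat := #|[set e | head o e == v]|.

Definition indegS (o : E -> bool) (X : {set V}) : nat :=
  #|[set e | (head o e \in X) && (tail o e \notin X)]|.

Definition inK (x : V -> int) : bool :=
  [exists o : {ffun E -> bool}, [forall v, Posz (indeg o v) == x v]].

Definition dsort (m : V -> nat) : seq nat := sort geq [seq m v | v <- enum V].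

Definition lex_lt (s t : seq nat) : Prop :=
  exists i, (forall j, j < i -> nth 0 s j = nth 0 t j) /\ nth 0 s i < nth 0 t i.

Definition dec_min (m : V -> nat) : Prop :=
  inK (fun v => Posz (m v)) /\
  forall o : E -> bool, ~ lex_lt (dsort (indeg o)) (dsort m).

Definition dec_min_orientation (o : E -> bool) : Prop := dec_min (indeg o).

Definition Tm (m : V -> nat) (u : V) : {set V} :=
  [set s | inK (fun v => (Posz (m v) + Posz (v == s) - Posz (v == u))%R)].

Definition next_beta (m : V -> nat) (C : {set V}) : nat := \max_(v in ~: C) m v.

(* Canonical chain: C 0 = set0; C (i+1) = V if C i = V, otherwise
   the union of T_m(u) over u with m u >= beta_{i+1} = max{m s : s in V - C_i}.
   (For i = 0 this is the union over u with m u = beta_1 = max m.) *)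
Fixpoint chainC (m : V -> nat) (i : nat) : {set V} :=
  match i with
  | 0 => set0
  | i'.+1 => let C := chainC m i' in
             if C == setT then setT
             else \bigcup_(u | next_beta m C <= m u) Tm m u
  end.

Definition betaI (m : V -> nat) (i : nat) : nat := next_beta m (chainC m i.-1).

Definition partS (m : V -> nat) (i : nat) : {set V} := chainC m i :\: chainC m i.-1.

End Orient.

From Pilot Require Import Defs.
From mathcomp Require Import all_boot all_order all_algebra.
From mathcomp Require Import zify.
Set Implicit Arguments. Unset Strict Implicit.

(* Comparing decreasingly sorted vectors lexicographically amounts to comparing
   their weights [\sum_v B ^ x v] in base [B = |V| + 1], so [D] is decreasingly
   minimal iff its in-degree vector has the weight of [m0], the in-degree vector
   of some orientation [D0].

   [T_m0(u)] is the set of nodes from which [u] is reachable in [D0] (reversing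
   a path moves one unit of in-degree), so no arc of [D0] enters any [C_i], and
   weight-minimality forbids [m0(s) <= m0(u) - 2] for [s] in [T_m0(u)]; hence
   [beta_i - 1 <= m0 <= beta_i] on [S_i].

   Walk up the chain keeping the invariant "no arc of [D] enters [C_i] and [D]
   has the weight of [m0] on [C_i]". If [D] has the weight of [m0], then outside
   [C_i] its entries are at most [beta_(i+1)] and as many of them equal
   [beta_(i+1)] as for [m0] (the leading base-[B] digit), all in [S_(i+1)]. The
   in-degree sum over [S_(i+1)] is the number of edges spanned by [C_(i+1)] but
   not by [C_i], plus the arcs entering [C_(i+1)]; this forces no arc to enter
   [C_(i+1)] and the window bounds on [S_(i+1)]. Conversely, in-degree vectors
   in the window with the same sum have the same weight. *)

Lemma lex_lt_total (s t : seq nat) : size s = size t -> s <> t ->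
  lex_lt s t \/ lex_lt t s.
Proof.
elim: s t => [|a s IH] [|b t] //= [] eq_size neq_st.
have [eq_ab|neq_ab] := eqVneq a b.
  subst b.
  have neq_st' : s <> t by move=> eq_st; apply: neq_st; rewrite eq_st.
  case: (IH t eq_size neq_st') => [[i [pre lt_i]]|[i [pre lt_i]]]; [left|right];
    exists i.+1; split=> //; case=> //= j /pre.
case: (ltngtP a b) => [lt_ab|lt_ba|eq_ab]; last by rewrite eq_ab eqxx in neq_ab.
- by left; exists 0.
- by right; exists 0.
Qed.

(* After the common prefix, the tail of [s] is at most [size s] copies of
   [B ^ s_i], which is less than [B ^ s_i.+1 <= B ^ t_i]. *)
Lemma lex_lt_sum_expn (B : nat) (s t : seq nat) :
  sorted geq s -> sorted geq t -> size s = size t -> size s < B ->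
  lex_lt s t -> \sum_(a <- s) B ^ a < \sum_(a <- t) B ^ a.
Proof.
move=> sorted_s _ eq_size lt_size_B [i [pre lt_i]].
have lt_i_size : i < size s.
  by rewrite ltnNge; apply/negP => le; move: lt_i; rewrite !nth_default -?eq_size.
have B_gt0 : 0 < B by apply: leq_ltn_trans lt_size_B.
rewrite (big_nth 0) [X in _ < X](big_nth 0) -eq_size.
rewrite !(@big_cat_nat _ _ _ i 0 (size s) _ _ (leq0n i) (ltnW lt_i_size)) /=.
have -> : \sum_(0 <= j < i) B ^ nth 0 s j = \sum_(0 <= j < i) B ^ nth 0 t j.
  by apply: eq_big_nat => j /andP [_ /pre ->].
rewrite ltn_add2l.
have tail_s : \sum_(i <= j < size s) B ^ nth 0 s j <= size s * B ^ nth 0 s i.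
  apply: (@leq_trans ((size s - i) * B ^ nth 0 s i)); last by rewrite leq_mul2r leq_subr orbT.
  rewrite -sum_nat_const_nat big_nat_cond [X in _ <= X]big_nat_cond.
  apply: leq_sum => j /andP[/andP[le_ij lt_j] _]; apply: leq_pexp2l => //.
  apply: (sorted_leq_nth (fun a b c h1 h2 => leq_trans h2 h1) leqnn 0 sorted_s) => //.
apply: (leq_ltn_trans tail_s); apply: (@leq_trans (B ^ (nth 0 s i).+1)).
  by rewrite expnS ltn_mul2r expn_gt0 B_gt0.
apply: (@leq_trans (B ^ nth 0 t i)); first exact: leq_pexp2l.
by rewrite big_ltn // leq_addr.
Qed.

Section Weight.
Variable V : finType.

Definition weight (x : V -> nat) : nat := \sum_v #|V|.+1 ^ x v.

Lemma weight_setC (A : {set V}) (x : V -> nat) :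
  weight x = \sum_(v in A) #|V|.+1 ^ x v + \sum_(v in ~: A) #|V|.+1 ^ x v.
Proof. by rewrite /weight (bigID (mem A)) /=; congr (_ + _); apply: eq_bigl => v; rewrite inE. Qed.

Lemma size_dsort (x : V -> nat) : size (dsort x) = #|V|.
Proof. by rewrite /dsort size_sort size_map cardT. Qed.

Lemma sorted_dsort (x : V -> nat) : sorted geq (dsort x).
Proof. by apply: sort_sorted => a b; exact: leq_total. Qed.

Lemma weight_dsort (x : V -> nat) : weight x = \sum_(a <- dsort x) #|V|.+1 ^ a.
Proof. by rewrite /dsort (perm_big _ (permEl (perm_sort _ _))) big_map big_enum. Qed.

Lemma lex_lt_weight (x y : V -> nat) :
  lex_lt (dsort x) (dsort y) -> weight x < weight y.
Proof.
move=> lt_xy; rewrite !weight_dsort.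
by apply: lex_lt_sum_expn; rewrite ?sorted_dsort ?size_dsort.
Qed.

Lemma weight_le_of_not_lex (x y : V -> nat) :
  ~ lex_lt (dsort y) (dsort x) -> weight x <= weight y.
Proof.
move=> not_lt; rewrite leqNgt; apply/negP => lt_yx.
have neq : dsort y <> dsort x by move=> eq; move: lt_yx; rewrite !weight_dsort eq ltnn.
have eq_size : size (dsort y) = size (dsort x) by rewrite !size_dsort.
case: (lex_lt_total eq_size neq) => // /lex_lt_weight.
by rewrite ltnNge (ltnW lt_yx).
Qed.

End Weight.

Lemma card_set_sum (T : finType) (P : pred T) : #|[set x | P x]| = \sum_x P x.
Proof. by rewrite -sum1_card big_mkcond /=; apply: eq_bigr => x _; rewrite inE; case: (P x). Qed.

Lemma sum_eq_mem (T : finType) (X : {set T}) (a : T) : \sum_(x in X) (a == x : nat) = (a \in X).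
Proof.
case: (boolP (a \in X)) => [aX|naX].
  by rewrite (bigD1 a) //= eqxx big1 // => x /andP [_ /negbTE]; rewrite eq_sym => ->.
by rewrite big1 // => x xX; case: eqP => // eq_ax; rewrite eq_ax xX in naX.
Qed.

Section Orientation.
Variables (V E : finType) (ends : E -> V * V).
Implicit Types (o : E -> bool) (X : {set V}).

Local Notation head := (Defs.head ends).
Local Notation tail := (Defs.tail ends).
Local Notation indeg := (indeg ends).
Local Notation indegS := (indegS ends).

Definition inner_edges X : nat :=
  \sum_e (((ends e).1 \in X) && ((ends e).2 \in X) : nat).

Lemma indegE o v : indeg o v = \sum_e (head o e == v : nat).
Proof. exact: card_set_sum. Qed.

Lemma indegSE o X : indegS o X = \sum_e ((head o e \in X) && (tail o e \notin X) : nat).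
Proof. exact: card_set_sum. Qed.

Lemma indeg_finfun o : indeg (finfun o) =1 indeg o.
Proof. by move=> v; rewrite !indegE; apply: eq_bigr => e _; rewrite /Defs.head ffunE. Qed.

Lemma sum_indeg o X : \sum_(v in X) indeg o v = inner_edges X + indegS o X.
Proof.
under eq_bigr => v _ do rewrite indegE.
rewrite exchange_big /= indegSE /inner_edges -big_split /=.
apply: eq_bigr => e _; rewrite sum_eq_mem /Defs.head /Defs.tail.
by case: (o e); case: (_ \in X); case: (_ \in X).
Qed.

Lemma indegS_eq0P o X :
  reflect (forall e, head o e \in X -> tail o e \in X) (indegS o X == 0).
Proof.
rewrite indegSE sum_nat_eq0; apply: (iffP forallP) => [X_closed e in_X|X_closed e].
  by move: (X_closed e); rewrite in_X /= eqb0 negbK.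
by case: (boolP (head o e \in X)) => //= /X_closed ->.
Qed.

Lemma sum_indeg_le_of_closed o0 o X : indegS o0 X = 0 ->
  \sum_(v in X) indeg o0 v <= \sum_(v in X) indeg o v.
Proof. by move=> X_closed; rewrite !sum_indeg X_closed addn0 leq_addr. Qed.

Definition arc o : rel V := fun y z => [exists e, (tail o e == y) && (head o e == z)].

Definition flip o (e : E) : {ffun E -> bool} :=
  [ffun e' => if e' == e then ~~ o e' else o e'].

Lemma indeg_flip o e w :
  indeg (flip o e) w + (head o e == w) = indeg o w + (tail o e == w).
Proof.
rewrite !indegE (bigD1 e) //= [X in _ = X + _](bigD1 e) //=.
rewrite (eq_bigr (fun i => head o i == w : nat)) => [|i ne]; last first.
  by rewrite /Defs.head ffunE (negbTE ne).
by rewrite /Defs.head /Defs.tail ffunE eqxx; case: (o e) => /=; lia.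
Qed.

Lemma reverse_path o s p : path (arc o) s p -> uniq (s :: p) ->
  exists o' : {ffun E -> bool}, forall w,
    indeg o' w + (w == last s p) = indeg o w + (w == s).
Proof.
elim: p o s => [|x p IH] o s /=.
  by move=> _ _; exists (finfun o) => w; rewrite indeg_finfun.
move=> /andP [/existsP [e /andP [/eqP tail_e /eqP head_e]] path_p] /andP [s_notin uniq_p].
have path_flip : path (arc (flip o e)) x p.
  apply: (sub_in_path (P := predC1 s) _ _ path_p).
    move=> y z /= ne_ys _ /existsP [e' /andP [tail_e' head_e']].
    have ne_e' : e' != e by apply: contra_neq ne_ys => eq_e; rewrite -(eqP tail_e') eq_e.
    apply/existsP; exists e'; move: tail_e' head_e'.
    by rewrite /Defs.head /Defs.tail ffunE (negbTE ne_e') => -> ->.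
  by apply/allP => y y_in /=; apply: contraNneq s_notin => <-.
have [o' indeg_o'] := IH (flip o e) x path_flip uniq_p.
exists o' => w; move: (indeg_o' w) (indeg_flip o e w).
by rewrite tail_e head_e (eq_sym x w) (eq_sym s w); lia.
Qed.

Lemma mem_Tm (m : V -> nat) s u : s \in Tm ends m u <->
  exists o : {ffun E -> bool}, forall w, indeg o w + (w == u) = m w + (w == s).
Proof.
rewrite inE; split => [/existsP [o /forallP eq_o]|[o eq_o]].
  by exists o => w; move/eqP: (eq_o w); lia.
by apply/existsP; exists o; apply/forallP => w; apply/eqP; move: (eq_o w); lia.
Qed.

Lemma dec_min_weight m0 : dec_min ends m0 ->
  (exists D0 : E -> bool, indeg D0 =1 m0) /\ forall o, weight m0 <= weight (indeg o).
Proof.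
move=> [/existsP [D0 /forallP eq_D0] min_m0]; split=> [|o].
  by exists D0 => v; move/eqP: (eq_D0 v) => [].
exact: weight_le_of_not_lex.
Qed.

Lemma dec_min_orientationE m0 D : dec_min ends m0 ->
  dec_min_orientation ends D <-> weight (indeg D) = weight m0.
Proof.
move=> /dec_min_weight [[D0 indeg_D0] le_m0].
split => [[_ min_D]|eq_w].
  apply/eqP; rewrite eqn_leq le_m0 andbT.
  have -> : weight m0 = weight (indeg D0) by apply: eq_bigr => v _; rewrite indeg_D0.
  exact: weight_le_of_not_lex.
split.
  by apply/existsP; exists (finfun D); apply/forallP => v; rewrite indeg_finfun.
by move=> o /lex_lt_weight; rewrite eq_w ltnNge le_m0.
Qed.

End Orientation.

Section Chain.
Variables (V E : finType) (ends : E -> V * V) (m0 : V -> nat) (D0 : E -> bool).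
Hypothesis indeg_D0 : indeg ends D0 =1 m0.

Local Notation C := (chainC ends m0).
Local Notation T := (Tm ends m0).

(* If [s] cannot reach [u], the set [R] of nodes reaching [u] has no entering
   arc in [D0], so no orientation has smaller total in-degree on [R]; yet
   [m0 + chi_s - chi_u] has. *)
Lemma mem_Tm_connect u s : (s \in T u) = connect (arc ends D0) s u.
Proof.
apply/idP/idP => [/mem_Tm [o eq_o]|/connectP [p path_p ->]]; last first.
  have [p' path_p' uniq_p' _] := shortenP path_p.
  have [o' eq_o'] := reverse_path path_p' uniq_p'.
  by apply/mem_Tm; exists o' => w; rewrite eq_o' indeg_D0.
apply/negPn/negP => not_reach.
pose R := [set x | connect (arc ends D0) x u].
have R_closed : indegS ends D0 R = 0.
  apply/eqP/indegS_eq0P => e; rewrite !inE; apply: connect_trans.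
  by apply: connect1; apply/existsP; exists e; rewrite !eqxx.
have eq_sum : \sum_(v in R) indeg ends o v + (u \in R) =
              \sum_(v in R) indeg ends D0 v + (s \in R).
  rewrite -!sum_eq_mem -!big_split /=; apply: eq_bigr => w _.
  by rewrite (eq_sym u) (eq_sym s) eq_o indeg_D0.
rewrite [u \in R]inE connect0 [s \in R]inE (negbTE not_reach) in eq_sum.
by have := sum_indeg_le_of_closed o R_closed; lia.
Qed.

Lemma mem_Tm_self u : u \in T u.
Proof. by rewrite mem_Tm_connect connect0. Qed.

Lemma chainC_step i : C i != setT ->
  C i.+1 = \bigcup_(u | next_beta m0 (C i) <= m0 u) T u.
Proof. by move=> /negbTE /= ->. Qed.

Lemma chainC_setT i : C i = setT -> C i.+1 = setT.
Proof. by move=> /= ->; rewrite eqxx. Qed.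

Lemma indegS_chainC i : indegS ends D0 (C i) = 0.
Proof.
apply/eqP/indegS_eq0P => e; case: i => [|i]; first by rewrite inE.
have [/chainC_setT -> //|C_i_neq] := eqVneq (C i) setT.
rewrite chainC_step // => /bigcupP [u le_u head_in]; apply/bigcupP; exists u => //.
move: head_in; rewrite !mem_Tm_connect; apply: connect_trans; apply: connect1.
by apply/existsP; exists e; rewrite !eqxx.
Qed.

Lemma sum_chainC i : \sum_(v in C i) m0 v = inner_edges ends (C i).
Proof.
rewrite -(eq_bigr _ (fun v _ => indeg_D0 v)) sum_indeg.
by rewrite indegS_chainC addn0.
Qed.

Lemma lt_next_beta i w : C i != setT -> w \notin C i.+1 -> m0 w < next_beta m0 (C i).
Proof.
move=> C_i_neq; apply: contraR; rewrite -leqNgt => le_w.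
by rewrite chainC_step //; apply/bigcupP; exists w => //; apply: mem_Tm_self.
Qed.

Lemma chainC_subS i : C i \subset C i.+1.
Proof.
case: i => [|i]; first exact: sub0set.
have [/chainC_setT/chainC_setT -> //|C_i_neq] := eqVneq (C i) setT.
have [/chainC_setT -> //|C_iS_neq] := eqVneq (C i.+1) setT.
apply/subsetP => s; rewrite [in X in X -> _]chainC_step // chainC_step //.
move=> /bigcupP [u le_u s_in]; apply/bigcupP; exists u => //.
apply: leq_trans le_u; apply/bigmax_leqP => w; rewrite inE => w_out.
exact/ltnW/lt_next_beta.
Qed.

Lemma chainC_card_ltS i : C i != setT -> #|C i| < #|C i.+1|.
Proof.
move=> C_i_neq; apply: proper_card; rewrite properE chainC_subS /=.
have : 0 < #|~: C i|.
  by rewrite card_gt0; apply: contra_neq C_i_neq => eq0; rewrite -[C i]setCK eq0 setC0.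
case/(eq_bigmax_cond m0) => w w_out max_w.
apply/subsetP => /(_ w); rewrite (negbTE C_i_neq) => w_in; move: w_out; rewrite inE w_in //.
by apply/bigcupP; exists w; rewrite /next_beta ?max_w // mem_Tm_self.
Qed.

Lemma chainC_card : C #|V| = setT.
Proof.
suff grow i : C i = setT \/ i <= #|C i|.
  by case: (grow #|V|) => // le_V; apply/eqP; rewrite eqEcard subsetT cardsT le_V.
elim: i => [|i [/chainC_setT|IH]]; [by right | by left |].
have [/chainC_setT|C_i_neq] := eqVneq (C i) setT; first by left.
by right; apply: leq_ltn_trans IH (chainC_card_ltS C_i_neq).
Qed.

End Chain.

Lemma sum_setD_subset (T : finType) (A A' : {set T}) (F : T -> nat) : A \subset A' ->
  \sum_(v in A') F v = \sum_(v in A) F v + \sum_(v in A' :\: A) F v.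
Proof. by move=> sub; rewrite (big_setID A) /= (setIidPr sub). Qed.

Section Digits.
Variables (I : finType) (B : nat).
Hypothesis lt_card_B : #|I| < B.
Implicit Types (S : {pred I}) (x y z : I -> nat).

Let B_gt0 : 0 < B := leq_ltn_trans (leq0n _) lt_card_B.

Lemma sum_expn_lt (P : pred I) x c :
  (forall v, P v -> x v < c) -> \sum_(v | P v) B ^ x v < B ^ c.
Proof.
case: c => [|c] lt_c.
  by rewrite big_pred0 // => v; apply/negP => /lt_c.
apply: (@leq_ltn_trans (\sum_(v | P v) B ^ c)).
  by apply: leq_sum => v /lt_c; rewrite ltnS; apply: leq_pexp2l.
rewrite sum_nat_const expnS ltn_mul2r expn_gt0 B_gt0 /=.
exact: leq_ltn_trans (max_card _) lt_card_B.
Qed.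

Lemma le_of_sum_expn_eq S b x y : (forall v, v \in S -> y v <= b) ->
  \sum_(v in S) B ^ x v = \sum_(v in S) B ^ y v -> forall v, v \in S -> x v <= b.
Proof.
move=> le_y eq_sum v v_in; rewrite leqNgt; apply/negP => lt_b.
have := sum_expn_lt (fun w w_in => le_y w w_in : y w < b.+1).
rewrite -eq_sum ltnNge (bigD1 v) //=.
by rewrite (leq_trans (leq_pexp2l B_gt0 lt_b)) ?leq_addr.
Qed.

(* The number of entries equal to the common bound [b] is the leading base-[B]
   digit of the power sum. *)
Lemma count_eq_of_sum_expn_eq S b x y :
  (forall v, v \in S -> x v <= b) -> (forall v, v \in S -> y v <= b) ->
  \sum_(v in S) B ^ x v = \sum_(v in S) B ^ y v ->
  \sum_(v in S) (x v == b : nat) = \sum_(v in S) (y v == b : nat).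
Proof.
have digits z : (forall v, v \in S -> z v <= b) ->
    \sum_(v in S) B ^ z v = (\sum_(v in S) (z v == b : nat)) * B ^ b +
                            \sum_(v in S | z v != b) B ^ z v /\
    \sum_(v in S | z v != b) B ^ z v < B ^ b.
  move=> le_z; split.
    rewrite (bigID (fun v => z v == b)) /= big_distrl /= big_mkcondr /=.
    by congr (_ + _); apply: eq_bigr => v _; case: eqP => [->|]; rewrite ?mul1n.
  by apply: sum_expn_lt => v /andP [/le_z le_b ne_b]; rewrite ltn_neqAle ne_b.
move=> /digits [-> lt_x] /digits [-> lt_y] /(congr1 (divn^~ (B ^ b))).
by rewrite !divnMDl ?expn_gt0 ?B_gt0 // !divn_small // !addn0.
Qed.

Lemma sum_expn_eq_of_window S b x y :
  (forall v, v \in S -> b - 1 <= x v <= b) -> (forall v, v \in S -> b - 1 <= y v <= b) ->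
  \sum_(v in S) x v = \sum_(v in S) y v -> \sum_(v in S) B ^ x v = \sum_(v in S) B ^ y v.
Proof.
case: b => [|c] win_x win_y eq_sum.
  apply: eq_bigr => v v_in; have := win_x v v_in; have := win_y v v_in.
  by rewrite !leqn0 => /andP [_ /eqP ->] /andP [_ /eqP ->].
have expand z : (forall v, v \in S -> c.+1 - 1 <= z v <= c.+1) ->
  \sum_(v in S) z v = \sum_(v in S) c + \sum_(v in S) (z v == c.+1 : nat) /\
  \sum_(v in S) B ^ z v =
    \sum_(v in S) B ^ c + (\sum_(v in S) (z v == c.+1 : nat)) * (B ^ c.+1 - B ^ c).
  move=> win_z; rewrite big_distrl -!big_split /=; split.
    by apply: eq_bigr => v /win_z; case: eqP => [->|]; lia.
  apply: eq_bigr => v /win_z; case: eqP => [->|ne_c win_v].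
    by rewrite mul1n subnKC // leq_pexp2l.
  by rewrite (_ : z v = c) ?mul0n ?addn0 //; lia.
have [sum_x pow_x] := expand x win_x; have [sum_y pow_y] := expand y win_y.
rewrite pow_x pow_y; congr (_ + _ * _); apply/eqP.
by rewrite -(eqn_add2l (\sum_(v in S) c)) -sum_x -sum_y eq_sum.
Qed.

End Digits.

Lemma window_of_count_le (I : finType) (S : {pred I}) b (x y : I -> nat) :
  (forall v, v \in S -> b - 1 <= y v <= b) -> (forall v, v \in S -> x v <= b) ->
  \sum_(v in S) (x v == b : nat) <= \sum_(v in S) (y v == b : nat) ->
  \sum_(v in S) y v <= \sum_(v in S) x v ->
  \sum_(v in S) x v = \sum_(v in S) y v /\ forall v, v \in S -> b - 1 <= x v <= b.
Proof.
case: b => [|c] win_y le_x le_count le_sum.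
  have x0 v : v \in S -> x v = 0 by move/le_x; rewrite leqn0 => /eqP.
  have y0 v : v \in S -> y v = 0 by move/win_y; rewrite leqn0 => /andP [_ /eqP].
  split=> [|v /x0 -> //].
  by rewrite big1 => [|v /x0 //]; rewrite big1 // => v /y0.
have le_top v : v \in S -> x v <= c + (x v == c.+1) by move/le_x; case: eqP; lia.
have sum_y : \sum_(v in S) y v = \sum_(v in S) c + \sum_(v in S) (y v == c.+1 : nat).
  by rewrite -big_split /=; apply: eq_bigr => v /win_y; case: eqP; lia.
have [le_sum_x eq_iff] := leqif_sum (fun v v_in => leqif_eq (le_top v v_in)).
have sum_x_eq : \sum_(v in S) x v = \sum_(v in S) (c + (x v == c.+1)).
  apply/eqP; rewrite eqn_leq le_sum_x /=.
  by move: le_sum le_count; rewrite sum_y big_split /=; lia.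
split; first by move: le_sum le_count; rewrite sum_x_eq sum_y big_split /=; lia.
move: sum_x_eq => /eqP; rewrite eq_iff => /forall_inP eq_x v v_in.
by move: (eq_x v v_in) (le_x v v_in) => /eqP ->; case: (_ == _); lia.
Qed.

Section Agreement.
Variables (V E : finType) (ends : E -> V * V) (m0 : V -> nat) (D0 : E -> bool).
Hypothesis indeg_D0 : indeg ends D0 =1 m0.
Hypothesis weight_min : forall o : E -> bool, weight m0 <= weight (indeg ends o).

Local Notation C := (chainC ends m0).
Local Notation beta i := (next_beta m0 (C i)).
Local Notation B := #|V|.+1.
Implicit Types (D : E -> bool).

(* Otherwise [m0 - chi_u + chi_v] would have smaller weight. *)
Lemma Tm_exchange u v : v \in Tm ends m0 u -> m0 u <= m0 v + 1.
Proof.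
move=> /mem_Tm [o eq_o]; rewrite leqNgt; apply/negP => lt_vu.
have ne_uv : u != v by apply: contraTneq lt_vu => ->; lia.
have weight_uv x : weight x = B ^ x u + B ^ x v + \sum_(w | (w != u) && (w != v)) B ^ x w.
  by rewrite /weight (bigD1 u) //= (bigD1 v) /= 1?eq_sym // addnA.
have o_u : indeg ends o u + 1 = m0 u.
  by move: (eq_o u); rewrite eqxx (negbTE ne_uv) /=; lia.
have o_v : indeg ends o v = m0 v + 1.
  by move: (eq_o v); rewrite eqxx eq_sym (negbTE ne_uv) /=; lia.
have := weight_min o; rewrite !weight_uv.
rewrite [in X in _ <= X](eq_bigr (fun w => B ^ m0 w)) => [|w /andP [ne_u ne_v]]; last first.
  by move: (eq_o w); rewrite (negbTE ne_u) (negbTE ne_v) !addn0 => ->.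
rewrite o_v -o_u; rewrite -o_u in lt_vu.
have le_pow : B ^ (m0 v + 1) <= B ^ indeg ends o u by apply: leq_pexp2l => //; lia.
have double : 2 * B ^ indeg ends o u <= B ^ (indeg ends o u + 1).
  have V_gt0 : 0 < #|V| by apply/card_gt0P; exists u.
  by rewrite addn1 expnS leq_mul2r ltnS V_gt0 orbT.
have := expn_gt0 B (m0 v); lia.
Qed.

Lemma window_m0 i v : C i != setT -> v \in C i.+1 :\: C i -> beta i - 1 <= m0 v <= beta i.
Proof.
move=> C_i_neq /setDP [v_in v_out]; rewrite leq_bigmax_cond ?inE // andbT.
move: v_in; rewrite chainC_step // => /bigcupP [u le_u /Tm_exchange]; lia.
Qed.

Definition chain_agree D i : Prop :=
  indegS ends D (C i) = 0 /\ \sum_(v in C i) B ^ indeg ends D v = \sum_(v in C i) B ^ m0 v.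

Lemma sum_indeg_partS D i : indegS ends D (C i) = 0 ->
  \sum_(v in C i.+1 :\: C i) indeg ends D v =
  \sum_(v in C i.+1 :\: C i) m0 v + indegS ends D (C i.+1).
Proof.
move=> closed_i; have sub := chainC_subS indeg_D0 i.
have := sum_indeg ends D (C i.+1); have := sum_indeg ends D (C i).
have := sum_chainC indeg_D0 i.+1; have := sum_chainC indeg_D0 i.
by rewrite !(sum_setD_subset _ sub) closed_i; lia.
Qed.

Lemma chain_agreeS D i : C i != setT -> chain_agree D i ->
  indegS ends D (C i.+1) = 0 ->
  (forall v, v \in C i.+1 :\: C i -> beta i - 1 <= indeg ends D v <= beta i) ->
  chain_agree D i.+1.
Proof.
move=> C_i_neq [closed_i eq_i] closed_iS win_D; split => //.
rewrite !(sum_setD_subset _ (chainC_subS indeg_D0 i)) eq_i; congr (_ + _).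
apply: (sum_expn_eq_of_window (ltnSn _) win_D (fun v v_in => window_m0 C_i_neq v_in)).
by rewrite sum_indeg_partS // closed_iS addn0.
Qed.

(* Outside [C i] the weights agree, so [D] is bounded by [beta i] there and has
   as many entries [beta i] as [m0], all of which lie in [C i.+1]. *)
Lemma closed_window_of_weight_eq D i : weight (indeg ends D) = weight m0 ->
  C i != setT -> chain_agree D i ->
  indegS ends D (C i.+1) = 0 /\
  forall v, v \in C i.+1 :\: C i -> beta i - 1 <= indeg ends D v <= beta i.
Proof.
move=> eq_w C_i_neq [closed_i eq_i].
have eq_out : \sum_(v in ~: C i) B ^ indeg ends D v = \sum_(v in ~: C i) B ^ m0 v.
  by move: eq_w; rewrite !(weight_setC (C i)) eq_i => /addnI.
have le_m0 w : w \in ~: C i -> m0 w <= beta i by move=> w_out; apply: leq_bigmax_cond.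
have le_D := le_of_sum_expn_eq (ltnSn _) le_m0 eq_out.
have eq_count := count_eq_of_sum_expn_eq (ltnSn _) le_D le_m0 eq_out.
have S_out : C i.+1 :\: C i \subset ~: C i by apply/subsetP => w /setDP [_ w_out]; rewrite inE.
have count_S : \sum_(v in C i.+1 :\: C i) (indeg ends D v == beta i : nat) <=
               \sum_(v in C i.+1 :\: C i) (m0 v == beta i : nat).
  have rest0 : \sum_(w in ~: C i :\: (C i.+1 :\: C i)) (m0 w == beta i : nat) = 0.
    apply: big1 => w /setDP [w_out w_notS].
    have w_notin : w \notin C i.+1.
      by move: w_notS w_out; rewrite !inE; case: (w \in C i.+1); case: (w \in C i).
    by rewrite ltn_eqF // (lt_next_beta indeg_D0 C_i_neq w_notin).
  by move: eq_count; rewrite !(sum_setD_subset _ S_out) rest0 addn0 => <-; exact: leq_addr.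
have le_D_S v : v \in C i.+1 :\: C i -> indeg ends D v <= beta i.
  by move/(subsetP S_out); exact: le_D.
have sum_S := sum_indeg_partS closed_i.
have le_sum : \sum_(v in C i.+1 :\: C i) m0 v <= \sum_(v in C i.+1 :\: C i) indeg ends D v.
  by rewrite sum_S leq_addr.
have [eq_sum win_D] :=
  window_of_count_le (fun v v_in => window_m0 C_i_neq v_in) le_D_S count_S le_sum.
by split=> //; move: sum_S; rewrite eq_sum; lia.
Qed.

Lemma chain_agree_all D : (forall i, C i != setT -> chain_agree D i -> chain_agree D i.+1) ->
  forall i, chain_agree D i.
Proof.
move=> step; elim=> [|i IH].
  by split; [apply/eqP/indegS_eq0P => e; rewrite inE | rewrite !big_set0].
have [C_i_T|C_i_neq] := eqVneq (C i) setT; last exact: step.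
by move: IH; rewrite /chain_agree (chainC_setT C_i_T) C_i_T.
Qed.

Lemma weight_eq_of_chain_agree D : chain_agree D #|V| -> weight (indeg ends D) = weight m0.
Proof.
move=> [_ eq_sum].
by rewrite !(weight_setC (C #|V|)) eq_sum (chainC_card indeg_D0) setCT !big_set0.
Qed.

End Agreement.
Unset Implicit Arguments. Set Strict Implicit.

Theorem theorem4p7 (V E : finType) (ends : E -> V * V)
    (m0 : V -> nat) (Hm0 : dec_min ends m0) (D : E -> bool) :
  dec_min_orientation ends D <->
  (forall i : nat, 0 < i -> chainC ends m0 i.-1 != setT ->
     indegS ends D (chainC ends m0 i) = 0 /\
     forall v, v \in partS ends m0 i ->
       betaI ends m0 i - 1 <= indeg ends D v <= betaI ends m0 i).
Proof.
have [[D0 indeg_D0] weight_min] := dec_min_weight Hm0.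
rewrite (dec_min_orientationE D Hm0); split => [eq_w|windows].
  have step i : chainC ends m0 i != setT ->
      chain_agree ends m0 D i -> chain_agree ends m0 D i.+1.
    move=> C_i_neq agree_i.
    have [closed_iS win_D] := closed_window_of_weight_eq indeg_D0 weight_min eq_w C_i_neq agree_i.
    exact: (chain_agreeS indeg_D0 weight_min C_i_neq agree_i closed_iS win_D).
  case=> // i _ C_i_neq.
  exact: (closed_window_of_weight_eq indeg_D0 weight_min eq_w C_i_neq (chain_agree_all step i)).
apply: (weight_eq_of_chain_agree indeg_D0); apply: chain_agree_all => i C_i_neq agree_i.
have [closed_iS win_D] := windows i.+1 isT C_i_neq.
exact: (chain_agreeS indeg_D0 weight_min C_i_neq agree_i closed_iS win_D).
Qed.
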